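(* There is no (possibly randomized) transaction fee mechanism with non-trivial miner revenue that satisfies both UIC and $1$-SCP. This holds whether the block size $B$ is finite or infinite.
   Context: Setting (transaction fee mechanism, TFM). Each user $i$ has a private true value $v_i\ge 0$ for having its transaction confirmed in the next block and submits a single bid $b_i\ge 0$; a bid vector is $\mathbf b=(b_1,\dots,b_m)$, $\mathbf b_{-i}$ denotes all bids except $b_i$, and $(\mathbf b_{-i},b_i')$ the vector with $b_i$ replaced by $b_i'$. A block contains at most $B$ transactions ($B$ a positive integer, or $B=\infty$). A TFM consists of an inclusion rule (run by the miner) selecting at most $B$ bids to include in the block, and a confirmation rule, payment rule and miner-revenue rule (run by the blockchain, using only the included bids) deciding which included bids are confirmed, what each confirmed bid pays (at most its bid; unconfirmed bids pay $0$), and what the miner receives (at most the total payment of confirmed bids; any remainder is ''burnt''). Rules may be randomized; the mechanism treats users symmetrically (swapping two users' bids swaps their outcomes). Composing the honest inclusion rule with the other rules gives $(\mathbf x,\mathbf p,\mu)$: $x_i(\mathbf b)\in[0,1]$ is the probability user $i$ is confirmed, $p_i(\mathbf b)$ its expected payment, $\mu(\mathbf b)$ the miner's expected revenue. The TFM has non-trivial miner revenue if $\mu$ is not identically $0$. Strategic behavior: a strategic player is a single user, the miner, or a coalition of the miner with some users; it may have its users bid untruthfully after seeing all other bids, inject fake bids (true value $0$), and, if it contains the miner, include any set of at most $B$ available bids instead of following the inclusion rule. Ordinary utility of a player: miner's revenue (if the miner belongs to the player) plus $v-p$ for each confirmed transaction of the player with true value $v$ and payment $p$. UIC: assuming the miner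 follows the mechanism, each user's expected utility is maximized by bidding truthfully (no fake bids), whatever the other bids. $c$-SCP: for every coalition of the miner and between $1$ and $c$ users, the expected joint utility is maximized when its users bid truthfully and the miner follows the mechanism, whatever the other users' bids. *)

From HB Require Import structures.
From mathcomp Require Import all_boot all_order all_algebra.
From mathcomp Require Import reals.
Set Implicit Arguments. Unset Strict Implicit. Unset Printing Implicit Defensive.
Import Order.TTheory GRing.Theory Num.Theory.
Local Open Scope ring_scope.

Section TFM.
Variable R : realType.

(** Block size: [Some n] is a finite block size n (must be positive),
    [None] is B = infinity. *)
Definition block_ok (B : option nat) : bool :=
  if B is Some n then (0 < n)%N else true.
Definition fits (B : option nat) (k : nat) : bool :=
  if B is Some n then (k <= n)%N else true.

Definition nonneg (b : seq R) : bool := all (fun x => 0 <= x) b.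

(** A (possibly randomized) TFM, described through expectations.
    - [incl b s] : probability that the honest inclusion rule, on bid vector
      [b], includes exactly the bids selected by the mask [s];
    - [conf c j], [pay c j], [rev c] : confirmation probability and expected
      payment of the j-th bid of an included block [c], and expected miner
      revenue, as computed by the blockchain from the block [c] alone. *)
Record TFM := MkTFM {
  incl : forall b : seq R, (size b).-tuple bool -> R;
  conf : seq R -> nat -> R;
  pay  : seq R -> nat -> R;
  rev  : seq R -> R }.
Arguments incl t b s : clear implicits.

Variable M : TFM.

Definition valid_TFM (B : option nat) : Prop :=
  (forall b : seq R, nonneg b ->
     (forall s, 0 <= incl M b s) /\
     (\sum_(s : (size b).-tuple bool) incl M b s = 1) /\
     (forall s, incl M b s != 0 -> fits B (count id s))) /\
  (forall c : seq R, nonneg c -> fits B (size c) ->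
     (forall j, (j < size c)%N ->
        0 <= conf M c j <= 1 /\ pay M c j <= nth 0 c j * conf M c j) /\
     0 <= rev M c /\ rev M c <= \sum_(j < size c) pay M c j).

(** position of the i-th bid of [b] inside the block [mask s b] *)
Definition rank (s : seq bool) (i : nat) : nat := count id (take i s).

Definition xb (a : seq R) (s : seq bool) (i : nat) : R :=
  if nth false s i then conf M (mask s a) (rank s i) else 0.
Definition pb (a : seq R) (s : seq bool) (i : nat) : R :=
  if nth false s i then pay M (mask s a) (rank s i) else 0.

Definition hx (b : seq R) (i : nat) : R :=
  \sum_(s : (size b).-tuple bool) incl M b s * xb b s i.
Definition hp (b : seq R) (i : nat) : R :=
  \sum_(s : (size b).-tuple bool) incl M b s * pb b s i.
Definition hmu (b : seq R) : R :=
  \sum_(s : (size b).-tuple bool) incl M b s * rev M (mask s b).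

Definition swap (b : seq R) (j k : nat) : seq R :=
  set_nth 0 (set_nth 0 b j (nth 0 b k)) k (nth 0 b j).
Definition swapi (j k l : nat) : nat :=
  if l == j then k else if l == k then j else l.

Definition tfm_symmetric : Prop :=
  forall b : seq R, nonneg b -> forall j k l : nat,
    (j < size b)%N -> (k < size b)%N -> (l < size b)%N ->
    hx (swap b j k) l = hx b (swapi j k l) /\
    hp (swap b j k) l = hp b (swapi j k l) /\
    hmu (swap b j k) = hmu b.

Definition repl (b : seq R) (U : seq nat) (w : nat -> R) : seq R :=
  [seq if j \in U then w j else nth 0 b j | j <- iota 0 (size b)].

(** UIC: the miner follows the mechanism; user i with true value v may bid
    any b' and inject any fake bids f; other bids [b] arbitrary. *)
Definition UIC : Prop :=
  forall (b : seq R) (i : nat) (v b' : R) (f : seq R),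
    nonneg b -> (i < size b)%N -> 0 <= v -> 0 <= b' -> nonneg f ->
    let bh := repl b [:: i] (fun _ => v) in
    let a := repl b [:: i] (fun _ => b') ++ f in
    v * hx a i - hp a i - \sum_(k < size f) hp a (size b + k)
      <= v * hx bh i - hp bh i.

(** c-SCP: coalition of the miner with users U (1 <= |U| <= c) of true values
    v; deviation: bids w for U, fake bids f, and the miner includes any set
    (mask s) of at most B available bids.  (Randomized deviations are convex
    combinations of these deterministic ones.) *)
Definition SCP (B : option nat) (c : nat) : Prop :=
  forall (b : seq R) (U : seq nat) (v w : nat -> R) (f : seq R),
    nonneg b -> uniq U -> all (fun j => j < size b)%N U ->
    (1 <= size U <= c)%N ->
    (forall j, j \in U -> 0 <= v j) -> (forall j, j \in U -> 0 <= w j) ->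
    nonneg f ->
    let bh := repl b U v in
    let a := repl b U w ++ f in
    forall s : (size a).-tuple bool, fits B (count id s) ->
      rev M (mask s a) + \sum_(j <- U) (v j * xb a s j - pb a s j)
        - \sum_(k < size f) pb a s (size b + k)
      <= hmu bh + \sum_(j <- U) (v j * hx bh j - hp bh j).

Definition nontrivial_revenue : Prop :=
  exists b : seq R, nonneg b /\ hmu b != 0.

End TFM.

(* Fix all bids but the i-th one and write x(t), p(t), mu(t) for the outcome
   when user i bids t.  UIC says that a user of value v prefers bidding v to
   bidding w, and 1-SCP says the same for the joint utility mu + v x - p of the
   miner and user i.  The four resulting inequalities for w <= w' give
   |mu(w') - mu(w)| <= (w' - w) (x(w') - x(w)); summing them along a
   subdivision of [w, w'] into n steps divides the right-hand side by n, so mu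
   does not depend on any single bid.  Lowering the bids to 0 one at a time,
   the miner earns what it earns on all-zero bids, namely 0, since confirmed
   bids pay at most their bid. *)

From Pilot Require Import Defs.
From mathcomp Require Import all_boot all_order all_algebra reals.
From mathcomp Require Import ring lra.
Set Implicit Arguments. Unset Strict Implicit. Unset Printing Implicit Defensive.
Import Order.TTheory GRing.Theory Num.Theory.
Local Open Scope ring_scope.

Section Archimedean.
Variable R : archiRealFieldType.

Lemma bounded_natmul_eq0 (e K : R) :
  0 <= e -> (forall n, e *+ n.+1 <= K) -> e = 0.
Proof.
move=> e_ge0 bnd; apply/eqP; rewrite eq_le e_ge0 andbT leNgt; apply/negP => e_gt0.
have Ke_ge0 : 0 <= K / e by rewrite divr_ge0 // (le_trans e_ge0) // (le_trans _ (bnd 0%N)).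
have := archi_boundP Ke_ge0; set m := Num.Def.archi_bound _ => Ke_lt_m.
have := bnd m; rewrite -mulr_natr -ler_pdivlMl // => m1_le_Ke.
have : (m%:R : R) < m.+1%:R by rewrite ltr_nat.
lra.
Qed.

Section ConstOfDist.
Variables Mu X : R -> R.
Hypothesis dist_le : forall w w', 0 <= w -> w <= w' ->
  `|Mu w' - Mu w| <= (w' - w) * (X w' - X w).

Lemma dist_grid_le w d n : 0 <= w -> 0 <= d ->
  `|Mu (w + d *+ n) - Mu w| <= d * (X (w + d *+ n) - X w).
Proof.
move=> w_ge0 d_ge0; elim: n => [|n IH]; first by rewrite addr0 !subrr normr0 mulr0.
have t_ge0 : 0 <= w + d *+ n by rewrite addr_ge0 ?mulrn_wge0.
have := dist_le t_ge0 (_ : _ <= w + d *+ n + d); rewrite lerDl d_ge0.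
rewrite mulrSr addrA => /(_ isT) step.
have := ler_distD (Mu (w + d *+ n)) (Mu (w + d *+ n + d)) (Mu w).
lra.
Qed.

Lemma const_of_dist_le w w' : 0 <= w -> w <= w' -> Mu w' = Mu w.
Proof.
move=> w_ge0 ww'; apply/eqP; rewrite -subr_eq0 -normr_eq0; apply/eqP.
apply: (bounded_natmul_eq0 (K := (w' - w) * (X w' - X w))) => // n.
have nS_gt0 : 0 < n.+1%:R :> R by rewrite ltr0n.
set d := (w' - w) / n.+1%:R.
have d_ge0 : 0 <= d by rewrite divr_ge0 ?subr_ge0 // ltW.
have wd : w + d *+ n.+1 = w' by rewrite -mulr_natr divfK ?gt_eqF // addrC subrK.
have -> : w' - w = d *+ n.+1 by rewrite -wd addrAC subrr add0r.
rewrite mulrnAl ler_wMn2r // -wd; exact: dist_grid_le n.+1 w_ge0 d_ge0.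
Qed.
End ConstOfDist.

Lemma revenue_const_of_optimal (Mu X P : R -> R) :
  (forall v w, 0 <= v -> 0 <= w -> v * X w - P w <= v * X v - P v) ->
  (forall v w, 0 <= v -> 0 <= w ->
     Mu w + v * X w - P w <= Mu v + v * X v - P v) ->
  forall w w', 0 <= w -> w <= w' -> Mu w' = Mu w.
Proof.
move=> uic scp; apply: (const_of_dist_le (X := X)) => w w' w_ge0 ww'.
have w'_ge0 := le_trans w_ge0 ww'.
have := uic _ _ w_ge0 w'_ge0; have := uic _ _ w'_ge0 w_ge0.
have := scp _ _ w_ge0 w'_ge0; have := scp _ _ w'_ge0 w_ge0.
rewrite ler_norml; lra.
Qed.

End Archimedean.

Lemma mask_nseq T (s : seq bool) n (x : T) :
  size s = n -> mask s (nseq n x) = nseq (count id s) x.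
Proof. by move<-; elim: s => //= -[] s ->. Qed.

Section Mechanism.
Variables (R : realType) (M : TFM R) (B : option nat).
Hypothesis M_valid : valid_TFM M B.

Lemma size_repl (b : seq R) U w : size (repl b U w) = size b.
Proof. by rewrite size_map size_iota. Qed.

Lemma nth_repl (b : seq R) U w j : nth 0 (repl b U w) j =
  if (j < size b)%N then (if j \in U then w j else nth 0 b j) else 0.
Proof.
case: ltnP => hj; last by rewrite nth_default // size_repl.
by rewrite (nth_map 0%N) ?size_iota // nth_iota.
Qed.

Lemma nonneg_repl (b : seq R) U w :
  nonneg b -> {in U, forall j, 0 <= w j} -> nonneg (repl b U w).
Proof.
move=> /allP b_ge0 w_ge0; apply/(all_nthP 0) => j; rewrite size_repl => hj.
by rewrite nth_repl hj; case: ifPn => [/w_ge0 | _] //; apply/b_ge0/mem_nth.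
Qed.

Definition set_bid (b : seq R) i t := repl b [:: i] (fun _ => t).

Lemma set_bid_nth (b : seq R) i : set_bid b i (nth 0 b i) = b.
Proof.
apply: (@eq_from_nth _ 0); rewrite ?size_repl // => j hj.
by rewrite nth_repl hj inE; case: eqP => [->|].
Qed.

Lemma set_bid_oob (b : seq R) i t : (size b <= i)%N -> set_bid b i t = b.
Proof.
move=> hi; apply: (@eq_from_nth _ 0); rewrite ?size_repl // => j hj.
rewrite nth_repl hj inE; case: eqP => // ej.
by rewrite ej ltnNge hi in hj.
Qed.

Lemma expect_incl_le (a : seq R) (F : (size a).-tuple bool -> R) (K : R) :
  nonneg a -> (forall s : (size a).-tuple bool, fits B (count id s) -> F s <= K) ->
  \sum_(s : (size a).-tuple bool) @incl _ M a s * F s <= K.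
Proof.
move=> a_ge0 F_le; have [incl_ge0 [incl_sum1 incl_fits]] := M_valid.1 a a_ge0.
apply: (@le_trans _ _ (\sum_(s : (size a).-tuple bool) @incl _ M a s * K)).
  apply: ler_sum => s _; have [->|nz] := eqVneq (@incl _ M a s) 0; first by rewrite !mul0r.
  by rewrite ler_wpM2l // F_le // incl_fits.
by rewrite -mulr_suml incl_sum1 mul1r.
Qed.

Lemma uic_set_bid (b : seq R) i v w : UIC M -> nonneg b -> (i < size b)%N ->
  0 <= v -> 0 <= w ->
  v * hx M (set_bid b i w) i - hp M (set_bid b i w) i
    <= v * hx M (set_bid b i v) i - hp M (set_bid b i v) i.
Proof.
move=> uic b_ge0 hi v_ge0 w_ge0.
by have := uic b i v w [::] b_ge0 hi v_ge0 w_ge0 isT; rewrite /= cats0 big_ord0 subr0.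
Qed.

Lemma scp_set_bid (b : seq R) i v w : SCP M B 1 -> nonneg b -> (i < size b)%N ->
  0 <= v -> 0 <= w ->
  hmu M (set_bid b i w) + v * hx M (set_bid b i w) i - hp M (set_bid b i w) i
    <= hmu M (set_bid b i v) + v * hx M (set_bid b i v) i - hp M (set_bid b i v) i.
Proof.
move=> scp b_ge0 hi v_ge0 w_ge0.
have := scp b [:: i] (fun _ => v) (fun _ => w) [::] b_ge0 isT.
rewrite /= hi => /(_ isT isT (fun _ _ => v_ge0) (fun _ _ => w_ge0) isT).
rewrite cats0 -/(set_bid b i w) -/(set_bid b i v) => deviate.
have -> : hmu M (set_bid b i w) + v * hx M (set_bid b i w) i - hp M (set_bid b i w) i =
  \sum_(s : (size (set_bid b i w)).-tuple bool) @incl _ M (set_bid b i w) s *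
     (Defs.rev M (mask s (set_bid b i w)) +
       (v * xb M (set_bid b i w) s i - pb M (set_bid b i w) s i)).
  rewrite /hmu /hx /hp mulr_sumr -big_split -sumrB /=.
  by apply: eq_bigr => s _; ring.
(* Bidding w honestly is an incl-weighted mix of the deviations "bid w and
   include mask s", each of which 1-SCP bounds. *)
apply: expect_incl_le => [|s fits_s]; first exact: nonneg_repl.
by have := deviate s fits_s; rewrite !big_seq1 big_ord0 subr0; lra.
Qed.

Lemma hmu_set_bid (b : seq R) i t : UIC M -> SCP M B 1 -> nonneg b -> 0 <= t ->
  hmu M (set_bid b i t) = hmu M b.
Proof.
move=> uic scp b_ge0 t_ge0.
have [hi|hi] := ltnP i (size b); last by rewrite set_bid_oob.
have Mu_const := revenue_const_of_optimal (Mu := fun t => hmu M (set_bid b i t))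
  (fun v w v_ge0 w_ge0 => uic_set_bid uic b_ge0 hi v_ge0 w_ge0)
  (fun v w v_ge0 w_ge0 => scp_set_bid scp b_ge0 hi v_ge0 w_ge0).
have bi_ge0 : 0 <= nth 0 b i by move/allP: b_ge0; apply; exact: mem_nth.
rewrite -{2}(set_bid_nth b i).
by case: (lerP t (nth 0 b i)) => h; [rewrite (Mu_const _ _ t_ge0 h) | rewrite (Mu_const _ _ bi_ge0 (ltW h))].
Qed.

Definition zero_bids (b : seq R) k := repl b (iota 0 k) (fun _ => 0).

Lemma zero_bids0 (b : seq R) : zero_bids b 0 = b.
Proof. by rewrite /zero_bids /repl /= -/(mkseq _ _) mkseq_nth. Qed.

Lemma zero_bidsS (b : seq R) k : zero_bids b k.+1 = set_bid (zero_bids b k) k 0.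
Proof.
apply: (@eq_from_nth _ 0); rewrite ?size_repl // => j hj.
rewrite !nth_repl size_repl hj !mem_iota !add0n /= inE ltnS leq_eqVlt.
by case: (j == k).
Qed.

Lemma zero_bids_size (b : seq R) : zero_bids b (size b) = nseq (size b) 0.
Proof.
apply: (@eq_from_nth _ 0); rewrite ?size_repl ?size_nseq // => j hj.
by rewrite nth_repl hj mem_iota /= hj nth_nseq hj.
Qed.

Lemma hmu_zero_bids (b : seq R) k : UIC M -> SCP M B 1 -> nonneg b ->
  hmu M (zero_bids b k) = hmu M b.
Proof.
move=> uic scp b_ge0; elim: k => [|k IH]; first by rewrite zero_bids0.
by rewrite zero_bidsS hmu_set_bid // nonneg_repl.
Qed.

Lemma rev_nseq0 n : fits B n -> Defs.rev M (nseq n 0) = 0.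
Proof.
move=> fits_n; have nseq_ge0 : nonneg (nseq n (0 : R)) by rewrite /nonneg all_nseq lexx orbT.
have [conf_pay [rev_ge0 rev_le]] := M_valid.2 _ nseq_ge0 (etrans (congr1 _ (size_nseq n 0)) fits_n).
apply/eqP; rewrite eq_le rev_ge0 andbT (le_trans rev_le) //.
rewrite sumr_le0 // => j _; have [_] := conf_pay j (ltn_ord j).
by rewrite nth_nseq if_same mul0r.
Qed.

Lemma hmu_nseq0 n : hmu M (nseq n 0) = 0.
Proof.
have nseq_ge0 : nonneg (nseq n (0 : R)) by rewrite /nonneg all_nseq lexx orbT.
have [_ [_ incl_fits]] := M_valid.1 _ nseq_ge0.
rewrite /hmu big1 // => s _; have [->|/incl_fits] := eqVneq (@incl _ M _ s) 0.
  by rewrite mul0r.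
rewrite mask_nseq ?size_tuple ?size_nseq // => /rev_nseq0 ->.
by rewrite mulr0.
Qed.

End Mechanism.

Theorem mainTheorem1 (R : realType) (B : option nat) (M : TFM R) :
  block_ok B -> valid_TFM M B -> tfm_symmetric M ->
  ~ (nontrivial_revenue M /\ UIC M /\ SCP M B 1).
Proof.
move=> _ M_valid _ [[b [b_ge0 hmu_nz]] [uic scp]].
have := hmu_zero_bids M_valid (size b) uic scp b_ge0.
by rewrite zero_bids_size (hmu_nseq0 M_valid) => hmu0; rewrite -hmu0 eqxx in hmu_nz.
Qed.
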